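(* Consider the fidelity estimation problem with a single observable $O=|\psi\rangle\langle\psi|$ for a pure state $|\psi\rangle\in\mathbb{C}^d$, and unknown state $\rho=\mathbb{I}_d/d$. Let $K$ be the batch size of the median-of-means classical shadows estimator. For $n$ sufficiently large, $\gamma\ge 1/K$, and $d\ge 1000$, there exists an adversary that corrupts an $O(\gamma)$ fraction of the outcome vectors $|v_1\rangle,\ldots,|v_n\rangle$ and causes an error of at least $\Omega(\gamma d)$ for the median-of-means estimator.
   Context: Uniform POVM / classical shadows: each of $n$ copies of $\rho\in\mathbb{C}^{d\times d}$ is measured with the uniform POVM $\{d|v\rangle\langle v|\,\mathrm{d}v\}$ over unit vectors $|v\rangle\in\mathbb{C}^d$ ($\mathrm{d}v$ the unitarily invariant (Haar) probability measure on the complex unit sphere), so the outcome $|v\rangle$ has density $d\langle v|\rho|v\rangle$ with respect to $\mathrm{d}v$; this gives outcomes $|v_1\rangle,\ldots,|v_n\rangle$. Since $\operatorname{Tr}[O\rho]=(d+1)\mathbb{E}[\langle v|O|v\rangle]-\operatorname{Tr}[O]$, the median-of-means estimator with batch size $K$ divides the $n$ outcomes into $n/K$ batches of $K$ outcomes each, computes in each batch the empirical mean of $(d+1)\langle v_j|O|v_j\rangle-\operatorname{Tr}[O]$, and outputs the median of these batch means. The adversary may replace outcome vectors $|v_j\rangle$ by arbitrary unit vectors. *)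

From HB Require Import structures.
From mathcomp Require Import all_boot all_order all_algebra.
From mathcomp Require Import complex.
From mathcomp Require Import all_classical all_reals all_analysis.

Set Implicit Arguments.
Unset Strict Implicit.
Unset Printing Implicit Defensive.

Import Order.TTheory GRing.Theory Num.Theory.
Local Open Scope ring_scope.
Local Open Scope classical_set_scope.

(* Vectors of C^d, with the Borel (product) sigma-algebra generated by  *)
(* the 2d real coordinates (real and imaginary parts).                  *)

Definition cvec (R : realType) (d : nat) : Type := 'cV[R[i]]_d.

HB.instance Definition _ (R : realType) d :=
  Choice.copy (cvec R d) 'cV[R[i]]_d.
HB.instance Definition _ (R : realType) d :=
  isPointed.Build (cvec R d) (0 : 'cV[R[i]]_d).

Definition cvec_coord (R : realType) d (i : 'I_(d + d)) (v : cvec R d) : R :=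
  match fintype.split i with
  | inl j => complex.Re (v j 0)
  | inr j => complex.Im (v j 0)
  end.

Section cvec_measurable.
Variables (R : realType) (d : nat).

Let cvec_set0 : g_sigma_preimage (@cvec_coord R d) set0.
Proof. exact: sigma_algebra0. Qed.

Let cvec_setC A : g_sigma_preimage (@cvec_coord R d) A ->
  g_sigma_preimage (@cvec_coord R d) (~` A).
Proof. exact: sigma_algebraC. Qed.

Let cvec_bigcup (F : (set (cvec R d))^nat) :
  (forall i, g_sigma_preimage (@cvec_coord R d) (F i)) ->
  g_sigma_preimage (@cvec_coord R d) (\bigcup_i (F i)).
Proof. exact: sigma_algebra_bigcup. Qed.

HB.instance Definition _ := @isMeasurable.Build default_measure_display
  (cvec R d) (g_sigma_preimage (@cvec_coord R d)) cvec_set0 cvec_setC cvec_bigcup.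

End cvec_measurable.

Definition dagger (R : realType) m n (A : 'M[R[i]]_(m, n)) : 'M[R[i]]_(n, m) :=
  (map_mx (fun z : R[i] => z^*) A)^T.

Definition braket (R : realType) d (u v : 'cV[R[i]]_d) : R[i] :=
  (dagger u *m v) 0 0.

Definition unit_vector (R : realType) d (v : 'cV[R[i]]_d) : Prop :=
  braket v v = 1.

Definition unitary (R : realType) d (U : 'M[R[i]]_d) : Prop :=
  dagger U *m U = 1%:M.

Definition qform (R : realType) d (O : 'M[R[i]]_d) (v : 'cV[R[i]]_d) : R[i] :=
  (dagger v *m O *m v) 0 0.

Definition proj1 (R : realType) d (psi : 'cV[R[i]]_d) : 'M[R[i]]_d :=
  psi *m dagger psi.

Definition maximally_mixed (R : realType) d : 'M[R[i]]_d := (d%:R^-1) %:M.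

Definition haar_sphere (R : realType) d
    (mu : probability (cvec R d) R) : Prop :=
  mu [set v : cvec R d | unit_vector v] = 1%E /\
  forall (U : 'M[R[i]]_d), unitary U ->
    forall A : set (cvec R d), measurable A ->
      mu ((fun v : cvec R d => (U *m v : cvec R d)) @^-1` A) = mu A.

(* outcome distribution of the uniform POVM {d |v><v| dv} on rho:       *)
(* density d <v|rho|v> with respect to dv                               *)
Definition povm_outcome_law (R : realType) d
    (mu : probability (cvec R d) R) (rho : 'M[R[i]]_d) (A : set (cvec R d))
    : \bar R :=
  (\int[mu]_(v in A) (d%:R * complex.Re (qform rho v))%:E)%E.

Definition iid_outcomes (R : realType) d dO (Omega : measurableType dO)
    (P : probability Omega R) (n : nat) (V : nat -> Omega -> cvec R d)
    (law : set (cvec R d) -> \bar R) : Prop :=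
  (forall j, (j < n)%N -> measurable_fun setT (V j)) /\
  forall A : nat -> set (cvec R d), (forall j, (j < n)%N -> measurable (A j)) ->
    P (\bigcap_(j in `I_n) (V j @^-1` A j)) = (\prod_(j < n) law (A j))%E.

(* lower median (median of an odd-length list is its middle element)   *)
Definition median (R : realType) (s : seq R) : R :=
  nth 0 (sort <=%R s) ((size s).-1 %/ 2).

(* single-shot estimate (d+1)<v|O|v> - Tr[O]  (real for Hermitian O)    *)
Definition shadow_value (R : realType) d (O : 'M[R[i]]_d) (v : 'cV[R[i]]_d) : R :=
  complex.Re ((d.+1)%:R * qform O v - \tr O).

(* outcomes w 0, ..., w (m*K - 1); batch b consists of w (b*K + k),     *)
Definition median_of_means (R : realType) d (O : 'M[R[i]]_d) (K m : nat)
    (w : nat -> cvec R d) : R :=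
  median [seq K%:R^-1 * \sum_(k < K) shadow_value O (w (b * K + k)%N)
         | b <- iota 0 m].

Definition num_corrupted (R : realType) d (n : nat) (w w' : nat -> cvec R d) : nat :=
  count (fun j => w' j != w j) (iota 0 n).

Definition adversary (R : realType) d (n : nat) (budget : R)
    (Adv : (nat -> cvec R d) -> (nat -> cvec R d)) : Prop :=
  forall w, (num_corrupted n w (Adv w))%:R <= budget /\
    forall j, (j < n)%N -> Adv w j != w j -> unit_vector (Adv w j).

From HB Require Import structures.
From mathcomp Require Import all_boot all_order all_algebra.
From mathcomp Require Import complex.
From mathcomp Require Import all_classical all_reals all_analysis.
From mathcomp Require Import lra.

Set Implicit Arguments.
Unset Strict Implicit.
Unset Printing Implicit Defensive.

Import Order.TTheory GRing.Theory Num.Theory.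
Local Open Scope ring_scope.
Local Open Scope classical_set_scope.

(* The adversary needs no concentration argument, since it sees the outcomes.
   Overwriting the first k ~ gamma K outcomes of every batch by a fixed unit
   vector t moves every batch mean, hence the median, by exactly
   (k / K) (s(t) - s(t')) relative to the choice t', where s is the
   single-shot value (d+1) <t|O|t> - Tr O.  For O = |psi><psi| we have
   s(psi) = d, while averaging |psi_i|^2 over the basis yields some e_i with
   s(e_i) <= 1/d.  The two corrupted estimates therefore lie at least
   gamma d / 4 apart, and planting whichever of psi, e_i lands farther from
   the true value Tr[O rho] leaves an error of at least gamma d / 8. *)

Lemma Re_natr (R : rcfType) n : complex.Re (n%:R : R[i]) = n%:R.
Proof. by rewrite -(rmorph_nat (@real_complex R)). Qed.

Lemma Re_natrM (R : rcfType) n (z : R[i]) :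
  complex.Re (n%:R * z) = n%:R * complex.Re z.
Proof. by rewrite mulr_natl raddfMn mulr_natl. Qed.

Lemma Re_conjcM_ge0 (R : rcfType) (z : R[i]) : 0 <= complex.Re (z^*%C * z).
Proof. by case: z => a b /=; rewrite mulNr opprK addr_ge0 // -expr2 sqr_ge0. Qed.

Lemma exists_le_mean (R : realDomainType) n (F : 'I_n -> R) : (0 < n)%N ->
  exists i, F i *+ n <= \sum_j F j.
Proof.
move=> n0; have [i _ Fi_min] := @arg_minP _ _ _ (Ordinal n0) xpredT F isT.
exists i; rewrite -[in F i *+ n](card_ord n) -sumr_const.
by apply: ler_sum => j _; apply: Fi_min.
Qed.

Lemma exists_batch_fraction (R : archiRealFieldType) (K : nat) (gamma : R) :
  (0 < K)%N -> K%:R^-1 <= gamma -> gamma <= 1 ->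
  exists k, [/\ (k <= K)%N, k%:R <= gamma * K%:R & gamma * K%:R / 2 <= k%:R].
Proof.
move=> K0 gammaK gamma1; have Kr : 0 < K%:R :> R by rewrite ltr0n.
have gammaK1 : 1 <= gamma * K%:R by rewrite -ler_pdivrMr // mul1r.
have gammaK_le : gamma * K%:R <= K%:R by rewrite ler_piMl // ltW.
exists (Num.truncn (gamma * K%:R)); set k := Num.truncn _.
have k_le : k%:R <= gamma * K%:R by rewrite truncn_le; lra.
have k_ge1 : 1 <= k%:R :> R by rewrite (ler_nat R 1) truncn_gt0.
have := truncnS_gt (gamma * K%:R); rewrite -/k -natr1 => k_gt.
by split=> //; [rewrite -(ler_nat R); lra | lra].
Qed.

Lemma mean_shift_ge (R : realFieldType) (K k : nat) (gamma D g : R) :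
  (0 < K)%N -> 0 <= D -> D / 2 <= g -> gamma * K%:R / 2 <= k%:R ->
  gamma * D / 4 <= g *+ k / K%:R.
Proof.
move=> K0 D0 gD k_half; have Kr : 0 < K%:R :> R by rewrite ltr0n.
have gap_k : D / 2 * k%:R <= g * k%:R by rewrite ler_wpM2r.
have half_k : D / 2 * (gamma * K%:R / 2) <= D / 2 * k%:R.
  by rewrite ler_wpM2l // divr_ge0.
by rewrite -mulr_natr ler_pdivlMr //; lra.
Qed.

Definition farther (T : Type) (R : numDomainType) (f : T -> R) (t0 : R)
    (a b : T) : T :=
  if `|f b - t0| <= `|f a - t0| then a else b.

Lemma farther_dist (T : Type) (R : realFieldType) (f : T -> R) t0 a b :
  `|f a - f b| / 2 <= `|f (farther f t0 a b) - t0|.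
Proof.
have := ler_distD t0 (f a) (f b); rewrite (distrC t0 (f b)) /farther.
by case: ifP => [|/negbT]; rewrite -?ltNge => ? ?; lra.
Qed.

Lemma median_shift (R : realType) (s : seq R) c : (0 < size s)%N ->
  median [seq x + c | x <- s] = median s + c.
Proof.
move=> s0; rewrite /median size_map sort_map.
have -> : relpre (+%R^~ c) <=%R = <=%R :> rel R.
  by apply/funext => x; apply/funext => y; rewrite /relpre /= lerD2r.
rewrite (nth_map 0) // size_sort.
by apply: leq_ltn_trans (leq_div _ _) _; rewrite prednK.
Qed.

Lemma count_mod_lt_iota K k m : (k <= K)%N ->
  count (fun j => j %% K < k)%N (iota 0 (m * K)) = (m * k)%N.
Proof.
move=> kK; elim: m => [|m IH]; first by rewrite !mul0n.
rewrite !mulSnr iotaD count_cat IH add0n; congr (_ + _)%N.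
rewrite -[(m * K)%N]addn0 iotaDl count_map.
rewrite (eq_in_count (a2 := fun j => j < k)%N); last first.
  by move=> j; rewrite mem_iota add0n => /= jK; rewrite modnMDl modn_small.
by rewrite -size_filter (filter_iota_ltn 0 kK) size_iota.
Qed.

Section shadows_of_projectors.
Variables (R : realType) (d : nat).
Implicit Types (psi u v : 'cV[R[i]]_d).

Lemma braketE u v : braket u v = \sum_j (u j 0)^*%C * v j 0.
Proof. by rewrite /braket /dagger mxE; apply: eq_bigr => j _; rewrite !mxE. Qed.

Lemma braket_delta_l i v : braket (delta_mx i 0) v = v i 0.
Proof.
rewrite braketE (bigD1 i) //= big1 ?addr0 => [|j /negbTE ji].
  by rewrite !mxE !eqxx /= oppr0 mul1r.
by rewrite !mxE ji /= oppr0 mul0r.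
Qed.

Lemma braket_delta_r i v : braket v (delta_mx i 0) = (v i 0)^*%C.
Proof.
rewrite braketE (bigD1 i) //= big1 ?addr0 => [|j /negbTE ji].
  by rewrite !mxE !eqxx /= mulr1.
by rewrite !mxE ji /= mulr0.
Qed.

Lemma unit_vector_delta i : unit_vector (delta_mx i 0 : 'cV[R[i]]_d).
Proof. by rewrite /unit_vector braket_delta_l mxE !eqxx. Qed.

Lemma qform_proj1 psi v : qform (proj1 psi) v = braket v psi * braket psi v.
Proof. by rewrite /qform /proj1 mulmxA -mulmxA [_ 0 0]mxE big_ord1. Qed.

Lemma mxtrace_proj1 psi : \tr (proj1 psi) = braket psi psi.
Proof. by rewrite /proj1 mxtrace_mulC /braket /mxtrace big_ord1. Qed.

Lemma shadow_value_proj1 psi v : unit_vector psi ->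
  shadow_value (proj1 psi) v =
  d.+1%:R * complex.Re (braket v psi * braket psi v) - 1.
Proof.
move=> psi1; rewrite /shadow_value qform_proj1 mxtrace_proj1 psi1.
by rewrite raddfB /= Re_natrM.
Qed.

Lemma shadow_value_proj1_self psi : unit_vector psi ->
  shadow_value (proj1 psi) psi = d%:R.
Proof.
by move=> psi1; rewrite shadow_value_proj1 // psi1 mulr1 /= mulr1 -natr1 addrK.
Qed.

Lemma exists_shadow_value_gap psi : (2 <= d)%N -> unit_vector psi ->
  exists i, d%:R / 2 <=
    shadow_value (proj1 psi) psi - shadow_value (proj1 psi) (delta_mx i 0).
Proof.
move=> d2 psi1; pose F j := complex.Re ((psi j 0)^*%C * psi j 0).
have sumF : \sum_j F j = 1.
  by rewrite -[1](Re_natr R 1) -psi1 braketE raddf_sum.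
have [i Fi] := exists_le_mean F (ltnW d2); rewrite sumF in Fi.
have Fi_ge0 : 0 <= F i by apply: Re_conjcM_ge0.
have d2r : 2 <= d%:R :> R by rewrite (ler_nat R 2 d).
exists i; rewrite shadow_value_proj1_self // shadow_value_proj1 //.
rewrite braket_delta_l braket_delta_r [_ * _^*%C]mulrC -/(F i).
rewrite -[d.+1%:R]natr1; rewrite -mulr_natr in Fi; nra.
Qed.

End shadows_of_projectors.

Section batch_prefix_corruption.
Variables (R : realType) (d : nat).
Implicit Types (O : 'M[R[i]]_d) (w : nat -> cvec R d).

Definition overwrite_prefix (K k : nat) (t : cvec R d) w : nat -> cvec R d :=
  fun j => if (j %% K < k)%N then t else w j.

Lemma overwrite_prefix_adversary (K k m : nat) (budget : R)
    (t : (nat -> cvec R d) -> cvec R d) :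
  (k <= K)%N -> (m * k)%:R <= budget -> (forall w, unit_vector (t w)) ->
  adversary (m * K) budget (fun w => overwrite_prefix K k (t w) w).
Proof.
move=> kK mk_budget t1 w; split=> [|j _]; last first.
  by rewrite /overwrite_prefix; case: ifP => [_ _|_]; rewrite ?eqxx.
apply: le_trans mk_budget; rewrite ler_nat -(count_mod_lt_iota m kK).
by apply: sub_count => j /=; rewrite /overwrite_prefix; case: ifP; rewrite ?eqxx.
Qed.

Lemma median_of_means_overwrite_prefixB O (K k m : nat) (a b : cvec R d) w :
  (0 < m)%N -> (k <= K)%N ->
  median_of_means O K m (overwrite_prefix K k a w) -
  median_of_means O K m (overwrite_prefix K k b w) =
  (shadow_value O a - shadow_value O b) *+ k / K%:R.
Proof.
move=> m0 kK; apply/eqP; rewrite subr_eq addrC /median_of_means.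
rewrite -median_shift ?size_map ?size_iota //; apply/eqP.
congr median; rewrite -map_comp; apply: eq_map => c /=.
rewrite [_ / _]mulrC -mulrDr; congr (_ * _).
have -> : (shadow_value O a - shadow_value O b) *+ k =
    \sum_(i < K | (i < k)%N) (shadow_value O a - shadow_value O b).
  rewrite -(big_ord_widen _ (fun=> shadow_value O a - shadow_value O b) kK).
  by rewrite sumr_const card_ord.
rewrite (big_mkcond (fun i : 'I_K => (i < k)%N)) -big_split /=.
apply: eq_bigr => i _.
rewrite /overwrite_prefix modnMDl modn_small //.
by case: ifP => _; rewrite ?addr0 // addrC subrK.
Qed.

End batch_prefix_corruption.

Theorem theorem4 (R : realType) :
  exists C c : R, 0 < C /\ 0 < c /\
  forall (d : nat), (1000 <= d)%N ->
  forall (K : nat), (0 < K)%N ->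
  forall (gamma : R), K%:R^-1 <= gamma -> gamma <= 1 ->
  forall (psi : 'cV[R[i]]_d), unit_vector psi ->
  forall (delta : R), 0 < delta ->
  exists N : nat, forall m : nat, (N <= m * K)%N ->
  forall (dO : measure_display) (Omega : measurableType dO)
         (P : probability Omega R) (mu : probability (cvec R d) R)
         (V : nat -> Omega -> cvec R d),
    haar_sphere mu ->
    iid_outcomes P (m * K) V (povm_outcome_law mu (maximally_mixed R d)) ->
    exists Adv : (nat -> cvec R d) -> (nat -> cvec R d),
      adversary (m * K) (C * gamma * (m * K)%:R) Adv /\
      exists F : set Omega, measurable F /\ ((1 - delta)%:E <= P F)%E /\
        forall omega, F omega ->
          c * gamma * d%:R <=
          `| median_of_means (proj1 psi) K m (Adv (fun j => V j omega))
             - complex.Re (\tr (proj1 psi *m maximally_mixed R d)) |.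
Proof.
exists 1, 8^-1; split; first exact: ltr01.
split; first by rewrite invr_gt0 ltr0n.
move=> d d1000 K K0 gamma gammaK gamma1 psi psi1 delta delta0.
exists 1%N => m mK dO Omega P mu V _ _.
have m0 : (0 < m)%N by case: m mK => //; rewrite mul0n.
have [k [kK k_le k_half]] := exists_batch_fraction K0 gammaK gamma1.
have d2 : (2 <= d)%N by apply: leq_trans d1000.
have [i gap] := exists_shadow_value_gap d2 psi1.
set t0 := complex.Re _.
pose estimate w t := median_of_means (proj1 psi) K m (overwrite_prefix K k t w).
pose target w := farther (estimate w) t0 psi (delta_mx i 0).
exists (fun w => overwrite_prefix K k (target w) w); split.
  apply: overwrite_prefix_adversary => // [|w].
    by rewrite mul1r natrM natrM mulrCA ler_wpM2l.
  by rewrite /target /farther; case: ifP => _ //; apply: unit_vector_delta.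
exists setT; split; first exact: measurableT.
split; first by rewrite probability_setT lee_fin gerDl oppr_le0 ltW.
move=> omega _; set w := fun j => V j omega.
apply: le_trans (farther_dist (estimate w) t0 psi (delta_mx i 0)).
rewrite /estimate median_of_means_overwrite_prefixB //.
have := mean_shift_ge K0 (ler0n R d) gap k_half.
set shift := _ / K%:R; have := ler_norm shift; lra.
Qed.
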